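(* Let $H$ be a complex Hilbert space, $A\in B(H)$ a nonzero positive semidefinite operator, and $T\in B_{A^{1/2}}(H)$. If $\lambda\in\mathbb C$ satisfies $\|T\|_A<|\lambda|$ and $\|T^{\diamond}\|_A<|\lambda|$, then $\lambda\in\rho_A(T^{\diamond})$.
   Context: $\|x\|_A=\langle Ax,x\rangle^{1/2}$. For $S\in B(H)$, $\|S\|_A=\sup\{\|Sx\|_A : x\in\overline{R(A)},\ \|x\|_A=1\}$. $B_{A^{1/2}}(H)=\{S\in B(H): R(S^*A^{1/2})\subset R(A^{1/2})\}$. For $S\in B_{A^{1/2}}(H)$, $S^{\diamond}$ is the unique operator in $B(H)$ with $S^*A^{1/2}=A^{1/2}S^{\diamond}$ and $R(S^{\diamond})\subset\overline{R(A^{1/2})}$; $S^\diamond\in B_{A^{1/2}}(H)$. $S\in B_{A^{1/2}}(H)$ is $A$-invertible in $B_{A^{1/2}}(H)$ if there is a nonzero $R\in B_{A^{1/2}}(H)$ with $ASR=ARS=A$; $\rho_A(S)=\{\lambda:\lambda I-S$ is $A$-invertible in $B_{A^{1/2}}(H)\}$. *)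

From HB Require Import structures.
From mathcomp Require Import all_boot all_order all_algebra.
From mathcomp Require Import boolp classical_sets reals constructive_ereal ereal.
From mathcomp Require Import complex.
Set Implicit Arguments. Unset Strict Implicit. Unset Printing Implicit Defensive.
Import Order.TTheory GRing.Theory Num.Theory.
Local Open Scope ring_scope.
Local Open Scope classical_set_scope.

Section Hilbert.
Variables (R : realType) (H : lmodType R[i]) (ip : H -> H -> R[i]).

Definition hnorm (x : H) : R := Num.sqrt (complex.Re (ip x x)).

Definition is_hilbert : Prop :=
  [/\ (forall (a : R[i]) x y z, ip (a *: x + y) z = a * ip x z + ip y z),
      (forall x y, ip x y = (ip y x)^*),
      (forall x, 0 <= ip x x),
      (forall x, ip x x = 0 -> x = 0) &
      (forall u : nat -> H,
          (forall e : R, 0 < e -> exists N, forall m n, (N <= m)%N -> (N <= n)%N ->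
               hnorm (u m - u n) < e) ->
          exists l : H, forall e : R, 0 < e -> exists N, forall n, (N <= n)%N ->
               hnorm (u n - l) < e)].

Definition bounded_op (S : H -> H) : Prop :=
  linear S /\ exists M : R, forall x, hnorm (S x) <= M * hnorm x.

Definition is_adjoint (S Sa : H -> H) : Prop :=
  bounded_op Sa /\ forall x y, ip (S x) y = ip x (Sa y).


Definition hclosure (E : set H) : set H :=
  [set x | forall e : R, 0 < e -> exists2 y, E y & hnorm (x - y) < e].

Definition positive_op (A : H -> H) : Prop :=
  bounded_op A /\ forall x, 0 <= ip (A x) x.

(* A12 is the positive square root A^{1/2} of A (it is unique) *)
Definition is_sqrt_op (A A12 : H -> H) : Prop :=
  positive_op A12 /\ forall x, A12 (A12 x) = A x.

Definition anorm (A : H -> H) (x : H) : R := Num.sqrt (complex.Re (ip (A x) x)).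

Definition opnormA (A S : H -> H) : \bar R :=
  ereal_sup [set (anorm A (S x))%:E | x in
               [set x | hclosure (range A) x /\ anorm A x = 1]].

Definition in_BA12 (A12 S : H -> H) : Prop :=
  bounded_op S /\ exists Sa, is_adjoint S Sa /\
     forall y, exists z, Sa (A12 y) = A12 z.

Definition is_diamond (A12 S Sd : H -> H) : Prop :=
  bounded_op Sd /\ (exists Sa, is_adjoint S Sa /\ forall x, Sa (A12 x) = A12 (Sd x))
  /\ (forall x, hclosure (range A12) (Sd x)).

Definition A_invertible (A A12 S : H -> H) : Prop :=
  exists Rr : H -> H, in_BA12 A12 Rr /\ (exists x, Rr x <> 0) /\
    (forall x, A (S (Rr x)) = A x) /\ (forall x, A (Rr (S x)) = A x).

Definition in_rhoA (A A12 S : H -> H) (l : R[i]) : Prop :=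
  A_invertible A A12 (fun x => l *: x - S x).

End Hilbert.

(* modulus |z| of a complex number, as a real number (the norm of R[i] is real) *)
Definition cabs (R : realType) (z : R[i]) : R := complex.Re `|z|.

(* Fix c < |lam| bounding both A-norms and let P be the orthogonal projection onto
   the closure of R(A).  As the A-norm of w only depends on P w, the A-norm bounds
   read |A^{1/2} T w| <= c |A^{1/2} w| and |A^{1/2} T^◇ w| <= c |A^{1/2} w| for all
   w; testing against R(A^{1/2}), resp. R(A), turns them into the operator bounds
   |T^◇ x| <= c |x| and |P T x| <= c |x|.  By the contraction principle lam - T^◇
   has a bounded inverse R.  Given y, the contraction principle also solves
   conj(lam) z - P T z = P y; applying A^{1/2} removes P, and the resulting
   A^{1/2} (conj(lam) z - T z) = A^{1/2} y yields R^* A^{1/2} y = A^{1/2} z, so R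
   lies in B_{A^{1/2}}(H). *)
From HB Require Import structures.
From mathcomp Require Import all_boot all_order all_algebra.
From mathcomp Require Import boolp classical_sets reals constructive_ereal ereal.
From mathcomp Require Import complex.
From mathcomp Require Import ring lra.
Set Implicit Arguments. Unset Strict Implicit. Unset Printing Implicit Defensive.
Import Order.TTheory GRing.Theory Num.Theory.
Local Open Scope classical_set_scope.
Local Open Scope complex_scope.
Local Open Scope ring_scope.

Local Notation Re := complex.Re.
Local Notation Im := complex.Im.

Section RealFacts.
Variable R : realType.

Lemma eventually_inv_succ_lt (d : R) : 0 < d ->
  exists N, forall n, (N <= n)%N -> (n.+1%:R : R)^-1 < d.
Proof.
move=> d0; have /archi_boundP : 0 <= d^-1 by rewrite invr_ge0 ltW.
set N := Num.Def.archi_bound _ => hN; exists N => n hn.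
rewrite -(invrK d) ltf_pV2 ?posrE ?invr_gt0 //.
by apply: lt_le_trans hN _; rewrite ler_nat leqW.
Qed.

Lemma bernoulli (h : R) n : 0 <= h -> 1 + n%:R * h <= (1 + h) ^+ n.
Proof.
move=> h0; elim: n => [|n IH]; first by rewrite mul0r addr0 expr0.
rewrite exprS -natr1 mulrDl mul1r; have := ler_wpM2l (addr_ge0 ler01 h0) IH.
have : 0 <= n%:R * h * h by rewrite !mulr_ge0.
by move=> *; nra.
Qed.

Lemma exists_expr_lt (q d : R) : 0 <= q < 1 -> 0 < d -> exists N : nat, q ^+ N < d.
Proof.
case/andP=> q0 q1 d0; have [->|qn0] := eqVneq q 0; first by exists 1%N; rewrite expr1.
have qp : 0 < q by rewrite lt_neqAle eq_sym qn0.
pose h := q^-1 - 1; have h0 : 0 < h by rewrite subr_gt0 invf_gt1.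
have [N /(_ N (leqnn N)) hN] := eventually_inv_succ_lt (mulr_gt0 h0 d0).
have hq : 1 + h = q^-1 by rewrite addrC subrK.
exists N.+1; have := bernoulli N.+1 (ltW h0); rewrite hq exprVn.
have Np : 0 < (N.+1%:R : R) by rewrite ltr0Sn.
have {}hN : 1 < N.+1%:R * h * d by rewrite -mulrA -ltr_pdivrMl // mulr1.
have QV : q ^+ N.+1 * (q ^+ N.+1)^-1 = 1 by rewrite mulfV // expf_neq0.
have Qp : 0 < q ^+ N.+1 by rewrite exprn_gt0.
move: hN QV Qp; move: (q ^+ N.+1) (q ^+ N.+1)^-1 (N.+1%:R * h) => Q V n hn QV Qp hV.
have : Q * n * d <= Q * V * d by rewrite ler_pM2r // ler_pM2l //; lra.
by rewrite QV mul1r; nra.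
Qed.

Lemma le_mul_eps_eq0 (a C : R) : 0 <= C -> (forall e, 0 < e -> `|a| <= C * e) -> a = 0.
Proof.
move=> C0 h; apply/normr0_eq0/eqP; rewrite eq_le normr_ge0 andbT.
apply/ler_addgt0Pr => e e0; rewrite add0r.
have e1 : 0 < e / (C + 1) by rewrite divr_gt0 // ltr_wpDl.
apply: le_trans (h _ e1) _; rewrite mulrA ler_pdivrMr ?ltr_wpDl //; nra.
Qed.

Lemma le_quadratic_eq0 (r M : R) : 0 <= M -> (forall t : R, 2 * t * r <= t ^+ 2 * M) -> r = 0.
Proof.
move=> M0 h; have := h (r / (M + 1)); set t := r / (M + 1) => ht.
have e : r = t * (M + 1) by rewrite /t divfK // gt_eqF // ltr_wpDl.
rewrite e in ht *; clearbody t.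
have : t ^+ 2 == 0 by rewrite eq_le sqr_ge0 andbT; nra.
by rewrite sqrf_eq0 => /eqP ->; rewrite mul0r.
Qed.

Lemma ge0_lt_fin (a : \bar R) (b : R) : (0 <= a)%E -> (a < b%:E)%E ->
  exists2 c : R, a = c%:E & 0 <= c < b.
Proof. by case: a => [r| |] //= r0 rb; exists r => //; rewrite -lee_fin r0 -lte_fin. Qed.

End RealFacts.

Section ComplexModulus.
Variable R : realType.
Implicit Types (a b : R[i]) (r : R).

Lemma normc_cabs a : `|a| = (cabs a)%:C.
Proof. by rewrite /cabs normc_def. Qed.

Lemma cabs_ge0 a : 0 <= cabs a.
Proof. by rewrite /cabs normc_def sqrtr_ge0. Qed.

Lemma cabsR r : cabs r%:C = `|r|.
Proof. by rewrite /cabs normc_def /= expr0n addr0 sqrtr_sqr. Qed.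

Lemma cabsJ a : cabs a^* = cabs a.
Proof. by rewrite /cabs norm_conjC. Qed.

Lemma cabsV a : cabs a^-1 = (cabs a)^-1.
Proof. by rewrite /cabs normfV normc_cabs -fmorphV. Qed.

Lemma cabs2 : cabs (2 : R[i]) = 2.
Proof. by rewrite -[2](rmorph_nat (real_complex R)) cabsR ger0_norm. Qed.

Lemma cabs_i : cabs 'i = 1 :> R.
Proof. by rewrite /cabs normc_def /= expr0n add0r expr1n sqrtr1. Qed.

Lemma conjC_real r : (r%:C)^* = r%:C.
Proof. by rewrite conj_Creal //; apply/complex_realP; exists r. Qed.

Lemma Re_realM r a : Re (r%:C * a) = r * Re a.
Proof. by case: a => x y /=; rewrite mul0r subr0. Qed.

Lemma Re_iM a : Re ('i * a) = - Im a.
Proof. by rewrite mulrC ReiNIm. Qed.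

End ComplexModulus.

Section LinearMap.
Variables (R : realType) (H : lmodType R[i]) (S : H -> H).
Hypothesis lS : linear S.
Implicit Types (a : R[i]) (x y : H).

Lemma linDZ a x y : S (a *: x + y) = a *: S x + S y.
Proof. exact: lS. Qed.

Lemma lin0 : S 0 = 0.
Proof.
have := linDZ 1 0 0; rewrite scaler0 addr0 scale1r.
by move/(congr1 (fun t => t - S 0)); rewrite subrr addrK.
Qed.

Lemma linD x y : S (x + y) = S x + S y.
Proof. by rewrite -{1}[x]scale1r linDZ scale1r. Qed.

Lemma linZ a x : S (a *: x) = a *: S x.
Proof. by rewrite -[a *: x]addr0 linDZ lin0 addr0. Qed.

Lemma linN x : S (- x) = - S x.
Proof. by rewrite -scaleN1r linZ scaleN1r. Qed.

Lemma linB x y : S (x - y) = S x - S y.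
Proof. by rewrite linD linN. Qed.

End LinearMap.

Section Hilbert.
Variables (R : realType) (H : lmodType R[i]) (ip : H -> H -> R[i]).
Hypothesis hH : is_hilbert ip.
Local Notation nm := (hnorm ip).
Implicit Types (x y z u v : H) (a : R[i]).

Lemma ipDZl a x y z : ip (a *: x + y) z = a * ip x z + ip y z.
Proof. by case: hH => h _ _ _ _; apply: h. Qed.

Lemma ipC x y : ip x y = (ip y x)^*.
Proof. by case: hH => _ h _ _ _; apply: h. Qed.

Lemma ip_ge0 x : 0 <= ip x x.
Proof. by case: hH => _ _ h _ _; apply: h. Qed.

Lemma ip_eq0 x : ip x x = 0 -> x = 0.
Proof. by case: hH => _ _ _ h _; apply: h. Qed.

Lemma ip0l z : ip 0 z = 0.
Proof.
have := ipDZl 1 0 0 z; rewrite scaler0 addr0 mul1r.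
by move/(congr1 (fun t => t - ip 0 z)); rewrite subrr addrK.
Qed.

Lemma ipDl x y z : ip (x + y) z = ip x z + ip y z.
Proof. by rewrite -{1}[x]scale1r ipDZl mul1r. Qed.

Lemma ipZl a x z : ip (a *: x) z = a * ip x z.
Proof. by rewrite -[a *: x]addr0 ipDZl ip0l addr0. Qed.

Lemma ipNl x z : ip (- x) z = - ip x z.
Proof. by rewrite -scaleN1r ipZl mulN1r. Qed.

Lemma ipBl x y z : ip (x - y) z = ip x z - ip y z.
Proof. by rewrite ipDl ipNl. Qed.

Lemma ip0r z : ip z 0 = 0.
Proof. by rewrite ipC ip0l conjC0. Qed.

Lemma ipDr x y z : ip z (x + y) = ip z x + ip z y.
Proof. by rewrite ipC ipDl rmorphD /= -!ipC. Qed.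

Lemma ipZr a x z : ip z (a *: x) = a^* * ip z x.
Proof. by rewrite ipC ipZl rmorphM /= -ipC. Qed.

Lemma ipNr x z : ip z (- x) = - ip z x.
Proof. by rewrite ipC ipNl rmorphN /= -ipC. Qed.

Lemma ipBr x y z : ip z (x - y) = ip z x - ip z y.
Proof. by rewrite ipDr ipNr. Qed.

Lemma ip_injr u v : (forall x, ip x u = ip x v) -> u = v.
Proof.
move=> h; apply/eqP; rewrite -subr_eq0; apply/eqP; apply: ip_eq0.
by rewrite ipBr h subrr.
Qed.

Lemma Re_ipC x y : Re (ip x y) = Re (ip y x).
Proof. by rewrite ipC; case: (ip y x). Qed.

Lemma hnorm_ge0 x : 0 <= nm x.
Proof. exact: sqrtr_ge0. Qed.

Lemma hnorm_sqr x : nm x ^+ 2 = Re (ip x x).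
Proof. by rewrite sqr_sqrtr //; have := ip_ge0 x; rewrite lecE => /andP[]. Qed.

Lemma ipxx x : ip x x = (nm x ^+ 2)%:C.
Proof.
rewrite hnorm_sqr; have := ip_ge0 x; rewrite lecE => /andP[/eqP].
by case: (ip x x) => a b /= ->.
Qed.

Lemma hnorm_eq0 x : nm x = 0 -> x = 0.
Proof. by move=> h; apply: ip_eq0; rewrite ipxx h expr0n. Qed.

Lemma hnorm0 : nm 0 = 0.
Proof. by rewrite /hnorm ip0l sqrtr0. Qed.

Lemma hnormZ a x : nm (a *: x) = cabs a * nm x.
Proof.
rewrite /hnorm ipZl ipZr mulrA -normCK normc_cabs -rmorphXn Re_realM.
by rewrite sqrtrM ?sqr_ge0 // sqrtr_sqr ger0_norm ?cabs_ge0.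
Qed.

Lemma hnorm_opp x : nm (- x) = nm x.
Proof. by rewrite -scaleN1r hnormZ -(rmorphN1 (real_complex R)) cabsR normrN1 mul1r. Qed.

Lemma hdistC x y : nm (x - y) = nm (y - x).
Proof. by rewrite -hnorm_opp opprB. Qed.

Lemma hnorm_sqrD x y : nm (x + y) ^+ 2 = nm x ^+ 2 + 2 * Re (ip x y) + nm y ^+ 2.
Proof. by rewrite !hnorm_sqr ipDl !ipDr !raddfD /= [Re (ip y x)]Re_ipC; ring. Qed.

Lemma hnorm_sqrB x y : nm (x - y) ^+ 2 = nm x ^+ 2 - 2 * Re (ip x y) + nm y ^+ 2.
Proof. by rewrite !hnorm_sqr ipBl !ipBr !raddfB /= [Re (ip y x)]Re_ipC; ring. Qed.

Lemma parallelogram x y : nm (x + y) ^+ 2 + nm (x - y) ^+ 2 = 2 * nm x ^+ 2 + 2 * nm y ^+ 2.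
Proof. by rewrite hnorm_sqrD hnorm_sqrB; ring. Qed.

Lemma Re_ipZr (t : R) x y : Re (ip x (t%:C *: y)) = t * Re (ip x y).
Proof. by rewrite ipZr conjC_real Re_realM. Qed.

Lemma Re_ip_i x y : Re (ip x ('i *: y)) = Im (ip x y).
Proof. by rewrite ipZr; case: (ip x y) => a b /=; rewrite !mul0r; ring. Qed.

Lemma cauchy_schwarz x y : Re (ip x y) <= nm x * nm y.
Proof.
have [/hnorm_eq0 ->|ny] := eqVneq (nm y) 0; first by rewrite ip0r hnorm0 mulr0.
have ny0 : 0 < nm y ^+ 2 by rewrite exprn_gt0 // lt_neqAle eq_sym ny hnorm_ge0.
set r := Re (ip x y); set X := nm x ^+ 2; set Y := nm y ^+ 2 in ny0 *.
pose t := r / Y; have tY : t * Y = r by rewrite /t divfK ?gt_eqF.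
(* expand [0 <= |x - t y|^2] at the optimal [t] *)
have := sqr_ge0 (nm (x - t%:C *: y)).
rewrite hnorm_sqrB Re_ipZr hnormZ cabsR exprMn real_normK ?num_real // -/r -/X -/Y => h.
have {h} : r ^+ 2 <= X * Y.
  have := mulr_ge0 (ltW ny0) h.
  have -> : Y * (X - 2 * (t * r) + t ^+ 2 * Y) = X * Y - 2 * r * (t * Y) + (t * Y) ^+ 2 by ring.
  by rewrite tY; nra.
rewrite /X /Y -exprMn; have := mulr_ge0 (hnorm_ge0 x) (hnorm_ge0 y).
by move: (nm x * nm y) => p; nra.
Qed.

Lemma ler_hnormD x y : nm (x + y) <= nm x + nm y.
Proof.
have := cauchy_schwarz x y; have := hnorm_sqrD x y.
have := hnorm_ge0 (x + y); have := hnorm_ge0 x; have := hnorm_ge0 y; nra.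
Qed.

Lemma ler_hdistD x y z : nm (x - z) <= nm (x - y) + nm (y - z).
Proof. by have := ler_hnormD (x - y) (y - z); rewrite addrA subrK. Qed.

Lemma hnorm_le_eps_eq0 x : (forall e : R, 0 < e -> nm x <= e) -> x = 0.
Proof.
move=> h; apply: hnorm_eq0; apply/eqP; rewrite eq_le hnorm_ge0 andbT.
by apply/ler_addgt0Pr => e e0; rewrite add0r; apply: h.
Qed.

Definition hcauchy (s : nat -> H) := forall e : R, 0 < e ->
  exists N, forall m n, (N <= m)%N -> (N <= n)%N -> nm (s m - s n) < e.

Definition hlim (s : nat -> H) (l : H) := forall e : R, 0 < e ->
  exists N, forall n, (N <= n)%N -> nm (s n - l) < e.

Lemma hilbert_complete s : hcauchy s -> exists l, hlim s l.
Proof. by case: hH => _ _ _ _ h; apply: h. Qed.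

Definition subspace (E : set H) := E 0 /\ forall a x y, E x -> E y -> E (a *: x + y).

Lemma subspaceD E x y : subspace E -> E x -> E y -> E (x + y).
Proof. by case=> _ hE hx hy; rewrite -[x]scale1r; apply: hE. Qed.

Lemma subspaceZ E a x : subspace E -> E x -> E (a *: x).
Proof. by case=> E0 hE hx; rewrite -[_ *: _]addr0; apply: hE. Qed.

Lemma subspaceB E x y : subspace E -> E x -> E y -> E (x - y).
Proof. by move=> hE hx hy; rewrite -scaleN1r addrC; case: hE => _; apply. Qed.

Lemma hclosure_sub (E : set H) x : E x -> hclosure ip E x.
Proof. by move=> hx e e0; exists x => //; rewrite subrr hnorm0. Qed.

Lemma hclosure_idem (E : set H) x : hclosure ip (hclosure ip E) x -> hclosure ip E x.
Proof.
move=> hx e e0; have e2 : 0 < e / 2 by rewrite divr_gt0.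
have [y hy hxy] := hx _ e2; have [u hu hyu] := hy _ e2.
by exists u => //; apply: le_lt_trans (ler_hdistD x y u) _; rewrite [e]splitr ltrD.
Qed.

Lemma subspace_hclosure E : subspace E -> subspace (hclosure ip E).
Proof.
move=> hE; split=> [|a x y hx hy e e0]; first exact/hclosure_sub/hE.1.
have a2 : 0 < cabs a + 2 by rewrite ltr_wpDl ?cabs_ge0.
have d0 : 0 < e / (cabs a + 2) by rewrite divr_gt0.
have de : e / (cabs a + 2) * (cabs a + 2) = e by rewrite divfK // gt_eqF.
move: (e / _) d0 de => d d0 de.
have [u hu hxu] := hx _ d0; have [v hv hyv] := hy _ d0.
exists (a *: u + v); first by apply: hE.2.
have -> : a *: x + y - (a *: u + v) = a *: (x - u) + (y - v).
  by rewrite scalerBr opprD addrACA.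
apply: le_lt_trans (ler_hnormD _ _) _; rewrite hnormZ //.
have := ler_wpM2l (cabs_ge0 a) (ltW hxu); have := cabs_ge0 a; nra.
Qed.

Section Projection.
Variable K : set H.
Hypotheses (hK : subspace K) (Kcl : forall x, hclosure ip K x -> K x).

Lemma dist_parallelogram x (d : R) m m' : K m -> K m' -> (forall w, K w -> d <= nm (x - w) ^+ 2) ->
  nm (m - m') ^+ 2 <= 2 * nm (x - m) ^+ 2 + 2 * nm (x - m') ^+ 2 - 4 * d.
Proof.
move=> hm hm' hd; pose mid := (2^-1 : R[i]) *: (m + m').
have /hd : K mid by apply: subspaceZ => //; apply: subspaceD.
have := parallelogram (x - m) (x - m').
have -> : x - m + (x - m') = 2 *: (x - mid).
  rewrite scalerBr /mid scalerA mulfV ?pnatr_eq0 // scale1r scaler_nat mulr2n.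
  by rewrite opprD addrACA.
have -> : x - m - (x - m') = m' - m by rewrite opprB addrC addrA subrK.
by rewrite hnormZ cabs2 exprMn hdistC => h1 h2; lra.
Qed.

Lemma min_seq_cauchy x (d : R) (f : nat -> H) : (forall n, K (f n)) ->
  (forall w, K w -> d <= nm (x - w) ^+ 2) ->
  (forall n, nm (x - f n) ^+ 2 < d + n.+1%:R^-1) -> hcauchy f.
Proof.
move=> Kf hd hf e e0.
have [N hN] := eventually_inv_succ_lt (divr_gt0 (exprn_gt0 2 e0) (ltr0n R 4)).
exists N => m n hm hn; rewrite -(ltr_pXn2r (n := 2)) ?nnegrE ?hnorm_ge0 ?ltW //.
have := dist_parallelogram (Kf m) (Kf n) hd.
have := hf m; have := hf n; have := hN _ hm; have := hN _ hn.
by move: (n.+1%:R^-1 : R) (m.+1%:R^-1 : R) => u v *; lra.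
Qed.

Lemma min_dist_exists x : exists2 p, K p & forall m, K m -> nm (x - p) <= nm (x - m).
Proof.
pose S := [set nm (x - m) ^+ 2 | m in K].
have hS : has_inf S.
  split; first by exists (nm (x - 0) ^+ 2), 0 => //; exact: hK.1.
  by exists 0 => _ [m _ <-]; exact: sqr_ge0.
have hd w : K w -> inf S <= nm (x - w) ^+ 2 by move=> hw; apply: ge_inf; [exact: hS.2 | exists w].
have approx n : exists m, K m /\ nm (x - m) ^+ 2 < inf S + n.+1%:R^-1.
  have n0 : 0 < (n.+1%:R : R)^-1 by rewrite invr_gt0.
  by have [_ [m hm <-] ?] := inf_adherent n0 hS; exists m.
have [f hf] := choice approx.
have [p hp] := hilbert_complete (min_seq_cauchy (fun n => (hf n).1) hd (fun n => (hf n).2)).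
exists p => [|m hm].
  apply: Kcl => e /hp[N hN]; exists (f N); first exact: (hf N).1.
  by rewrite hdistC; apply: hN.
apply/ler_addgt0Pr => e e0; have e2 : 0 < e / 2 by rewrite divr_gt0.
have [N1 hN1] := hp _ e2.
have [N2 hN2] := eventually_inv_succ_lt (exprn_gt0 2 e2).
move: (maxn N1 N2) (leq_maxl N1 N2) (leq_maxr N1 N2) => n /hN1 hfp /hN2 hn.
have hxf : nm (x - f n) < nm (x - m) + e / 2.
  rewrite -(ltr_pXn2r (n := 2)) ?nnegrE ?hnorm_ge0 ?addr_ge0 ?hnorm_ge0 ?ltW //.
  have hfn : nm (x - f n) ^+ 2 < nm (x - m) ^+ 2 + (e / 2) ^+ 2.
    by apply: lt_le_trans (hf n).2 _; apply: lerD; [apply: hd | apply: ltW].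
  have := hnorm_ge0 (x - m); nra.
by have := ler_hdistD x (f n) p; rewrite [e]splitr; lra.
Qed.

Lemma min_dist_orthogonal x p : K p -> (forall m, K m -> nm (x - p) <= nm (x - m)) ->
  forall m, K m -> ip (x - p) m = 0.
Proof.
move=> Kp hmin.
have hre w : K w -> Re (ip (x - p) w) = 0.
  move=> hw; apply: (le_quadratic_eq0 (sqr_ge0 (nm w))) => t.
  have /hmin : K (p + t%:C *: w) by apply: subspaceD => //; apply: subspaceZ.
  rewrite opprD addrA -(ler_pXn2r (n := 2)) ?nnegrE ?hnorm_ge0 //.
  rewrite (hnorm_sqrB (x - p)) (Re_ipZr t (x - p) w) hnormZ cabsR exprMn.
  by rewrite real_normK ?num_real // => h; lra.
move=> m hm; have := hre _ hm; have := hre ('i *: m) (subspaceZ _ hK hm).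
by rewrite Re_ip_i; case: (ip _ m) => a b /= -> ->.
Qed.

Theorem orthogonal_projection x : exists p, K p /\ forall m, K m -> ip (x - p) m = 0.
Proof.
have [p Kp hp] := min_dist_exists x; exists p; split => //.
exact: min_dist_orthogonal.
Qed.

Lemma proj_linear (P : H -> H) :
  (forall x, K (P x) /\ forall m, K m -> ip (x - P x) m = 0) -> linear P.
Proof.
move=> hP a x y; set z := a *: x + y.
apply/eqP; rewrite -subr_eq0; apply/eqP/ip_eq0.
set d := _ - _; have Kd : K d.
  by apply: subspaceB => //; [exact: (hP _).1 | apply: hK.2; apply: (hP _).1].
have hd : d = a *: (x - P x) + (y - P y) - (z - P z).
  have -> : a *: (x - P x) + (y - P y) = z - (a *: P x + P y).
    by rewrite /z scalerBr opprD addrACA.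
  by rewrite /d opprB [RHS]addrC addrA subrK.
by rewrite {1}hd ipBl ipDl ipZl !(hP _).2 // mulr0 !addr0 subrr.
Qed.

End Projection.

Section Functional.
Variables (f : H -> R[i]) (M : R).
Hypotheses (lf : forall a x y, f (a *: x + y) = a * f x + f y)
  (fM : forall x, Re (f x) <= M * nm x).

Let f0 : f 0 = 0.
Proof.
have := lf 1 0 0; rewrite scaler0 addr0 mul1r.
by move/(congr1 (fun t => t - f 0)); rewrite subrr addrK.
Qed.

Let fZ a x : f (a *: x) = a * f x.
Proof. by rewrite -[a *: x]addr0 lf f0 addr0. Qed.

Let fB x y : f (x - y) = f x - f y.
Proof. by rewrite -scaleN1r addrC lf mulN1r addrC. Qed.

Lemma functional_Re_bound x : `|Re (f x)| <= `|M| * nm x.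
Proof.
have hM u : Re (f u) <= `|M| * nm u.
  by apply: le_trans (fM u) _; apply: ler_wpM2r; [exact: hnorm_ge0 | exact: ler_norm].
rewrite ler_norml hM andbT lerNl -raddfN /= -mulN1r -fZ scaleN1r.
by rewrite -(hnorm_opp x) hM.
Qed.

Lemma functional_Im_bound x : `|Im (f x)| <= `|M| * nm x.
Proof.
by rewrite -normrN -Re_iM -fZ -[nm x]mul1r -cabs_i -hnormZ functional_Re_bound.
Qed.

Lemma functional_ker_closed x : hclosure ip [set y | f y = 0] x -> f x = 0.
Proof.
move=> hx; have near_ker e : 0 < e -> exists2 u, f x = f u & nm u <= e.
  by move=> /hx[m hm hxm]; exists (x - m); [rewrite fB hm subr0 | exact: ltW].
have hRe : Re (f x) = 0.
  apply: (le_mul_eps_eq0 (normr_ge0 M)) => e /near_ker[u -> hu].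
  by apply: le_trans (functional_Re_bound u) _; apply: ler_wpM2l.
have hIm : Im (f x) = 0.
  apply: (le_mul_eps_eq0 (normr_ge0 M)) => e /near_ker[u -> hu].
  by apply: le_trans (functional_Im_bound u) _; apply: ler_wpM2l.
by move: hRe hIm; case: (f x) => a b /= -> ->.
Qed.

Theorem riesz_representation : exists w, forall x, f x = ip x w.
Proof.
pose Ker := [set y | f y = 0].
have hK : subspace Ker by split => [|a x y hx hy]; rewrite /Ker /= ?lf ?hx ?hy ?mulr0 ?addr0.
have [hall | /existsNP[x0 nfx0]] := pselect (forall x, Ker x).
  by exists 0 => x; rewrite ip0r; apply: hall.
have fx0 : f x0 != 0 by apply/eqP.
have [p [Kp hp]] := orthogonal_projection hK functional_ker_closed x0.
set u := x0 - p in hp; have fu : f u = f x0 by rewrite /u fB Kp subr0.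
have uu : ip u u != 0 by apply: contra fx0 => /eqP/ip_eq0 u0; rewrite -fu u0 f0.
exists ((f u / ip u u)^* *: u) => x; rewrite ipZr conjCK.
(* [f x *: u - f u *: x] lies in the kernel, hence is orthogonal to [u] *)
have : ip (f x *: u - f u *: x) u = 0.
  by rewrite ipC hp ?conjC0 // /Ker /= fB !fZ mulrC subrr.
rewrite ipBl !ipZl => /eqP; rewrite subr_eq0 => /eqP h.
by rewrite mulrAC -h mulfK.
Qed.

End Functional.

Theorem adjoint_exists S : bounded_op ip S -> exists Sa, is_adjoint ip S Sa.
Proof.
move=> [lS [M hM]].
have {}hM x : nm (S x) <= `|M| * nm x.
  by apply: le_trans (hM x) _; apply: ler_wpM2r; [exact: hnorm_ge0 | exact: ler_norm].
have rep y : exists w, forall x, ip (S x) y = ip x w.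
  apply: (@riesz_representation _ (`|M| * nm y)) => [a x z | x].
    by rewrite (linDZ lS) ipDZl.
  apply: le_trans (cauchy_schwarz _ _) _; rewrite mulrAC.
  by apply: ler_wpM2r; [exact: hnorm_ge0 | exact: hM].
have [Sa hSa] := choice rep; exists Sa; split => //; split.
  by move=> a y z; apply: ip_injr => x; rewrite ipDr ipZr -!hSa -ipZr -ipDr.
exists `|M| => y; have := cauchy_schwarz (S (Sa y)) y; rewrite hSa -hnorm_sqr.
have := ler_wpM2r (hnorm_ge0 y) (hM (Sa y)).
have := hnorm_ge0 (Sa y); have := mulr_ge0 (normr_ge0 M) (hnorm_ge0 y); nra.
Qed.

Section Contraction.
Variables (F : H -> H) (q : R).
Hypotheses (q0 : 0 <= q) (q1 : q < 1) (hF : forall x y, nm (F x - F y) <= q * nm (x - y)).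
Let g n := iter n F 0.

Lemma iter_contraction_step n : nm (g n.+1 - g n) <= q ^+ n * nm (g 1 - g 0).
Proof.
elim: n => [|n IH]; first by rewrite expr0 mul1r.
by apply: le_trans (hF _ _) _; rewrite exprS -mulrA ler_wpM2l.
Qed.

Lemma iter_contraction_dist m j :
  (1 - q) * nm (g (m + j) - g m) <= nm (g 1 - g 0) * (q ^+ m - q ^+ (m + j)).
Proof.
elim: j => [|j IH]; first by rewrite addn0 !subrr hnorm0 !mulr0.
have hq : 0 <= 1 - q by rewrite subr_ge0 ltW.
have := ler_wpM2l hq (ler_hdistD (g (m + j).+1) (g (m + j)) (g m)).
have := iter_contraction_step (m + j); rewrite addnS exprS.
move: IH; move: (nm (g (m + j).+1 - g m)) (nm (g (m + j).+1 - g (m + j))).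
move: (nm (g (m + j) - g m)) (q ^+ m) (q ^+ (m + j)) => D qm Q D' s IH hs.
by have := ler_wpM2l hq hs; nra.
Qed.

Lemma iter_contraction_cauchy : hcauchy g.
Proof.
move=> e e0; set C := nm (g 1 - g 0); have C0 : 0 <= C by exact: hnorm_ge0.
have hq : 0 < 1 - q by rewrite subr_gt0.
have q01 : 0 <= q < 1 by rewrite q0 q1.
have [N hN] := exists_expr_lt q01 (divr_gt0 (mulr_gt0 e0 hq) (ltr_wpDl C0 ltr01)).
have {}hN : (C + 1) * q ^+ N < e * (1 - q) by rewrite mulrC -ltr_pdivlMr ?ltr_wpDl.
have far m j : (N <= m)%N -> nm (g (m + j) - g m) < e.
  move=> hm; have := iter_contraction_dist m j; rewrite -/C.
  have : q ^+ m <= q ^+ N by rewrite ler_wiXn2l // ltW.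
  have := exprn_ge0 (m + j) q0; have := exprn_ge0 N q0; have := hnorm_ge0 (g (m + j) - g m).
  move: hN; move: (nm _) (q ^+ m) (q ^+ (m + j)) (q ^+ N) => D a b c *; nra.
exists N => m n hm hn; case: (leqP m n) => hmn.
  by rewrite hdistC -(subnKC hmn); apply: far.
by rewrite -(subnKC (ltnW hmn)); apply: far.
Qed.

Theorem contraction_fixpoint : exists z, F z = z.
Proof.
have [z hz] := hilbert_complete iter_contraction_cauchy.
exists z; apply/eqP; rewrite -subr_eq0; apply/eqP/hnorm_le_eps_eq0 => e e0.
have [N hN] := hz _ (divr_gt0 e0 (ltr0n R 2)).
have hF' : nm (F z - g N.+1) <= nm (g N - z).
  by apply: le_trans (hF _ _) _; rewrite hdistC ler_piMl ?hnorm_ge0 // ltW.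
have := ler_hdistD (F z) (g N.+1) z; have := hN N (leqnn N); have := hN N.+1 (leqnSn N).
by rewrite [e]splitr => *; lra.
Qed.

End Contraction.

Section ScaleSub.
Variables (S : H -> H) (lam : R[i]) (c : R).
Hypotheses (lS : linear S) (c0 : 0 <= c) (clam : c < cabs lam)
  (hS : forall x, nm (S x) <= c * nm x).

Lemma scale_sub_lower_bound x : (cabs lam - c) * nm x <= nm (lam *: x - S x).
Proof.
have := ler_hdistD (lam *: x) (S x) 0; rewrite !subr0 hnormZ.
by have := hS x; nra.
Qed.

Lemma scale_sub_onto y : exists z, lam *: z - S z = y.
Proof.
have lam0 : 0 < cabs lam by apply: le_lt_trans clam.
have lamn0 : lam != 0 by apply: contraTneq lam0 => ->; rewrite /cabs normr0 ltxx.
have q0 : 0 <= c / cabs lam by rewrite divr_ge0 // ltW.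
have q1 : c / cabs lam < 1 by rewrite ltr_pdivrMr // mul1r.
have [|z hz] := contraction_fixpoint (F := fun z => lam^-1 *: (y + S z)) q0 q1.
  move=> u v; rewrite -scalerBr opprD addrACA subrr add0r -(linB lS) hnormZ cabsV.
  rewrite [leRHS]mulrAC [leRHS]mulrC; apply: ler_wpM2l; [by rewrite invr_ge0 ltW | exact: hS].
by exists z; rewrite -{1}hz scalerA mulfV // scale1r addrK.
Qed.

Theorem scale_sub_invertible : exists Rr, [/\ bounded_op ip Rr,
  forall x, lam *: Rr x - S (Rr x) = x & forall x, Rr (lam *: x - S x) = x].
Proof.
have lL : linear (fun x => lam *: x - S x).
  move=> a u v /=; rewrite (linDZ lS) scalerDr !scalerA scalerBr scalerA [lam * a]mulrC.
  by rewrite opprD addrACA.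
have gap : 0 < cabs lam - c by rewrite subr_gt0.
have L_inj u : lam *: u - S u = 0 -> u = 0.
  move=> hu; apply: hnorm_eq0; have := scale_sub_lower_bound u; rewrite hu hnorm0.
  by have := hnorm_ge0 u; nra.
have [Rr hRr] := choice scale_sub_onto.
have RrL x : Rr (lam *: x - S x) = x.
  by apply/eqP; rewrite -subr_eq0; apply/eqP/L_inj; rewrite (linB lL) hRr subrr.
exists Rr; split => //; split.
  by move=> a x y; rewrite -{1}(hRr x) -{1}(hRr y) -(linDZ lL) RrL.
exists (cabs lam - c)^-1 => x; rewrite ler_pdivlMl //.
by have := scale_sub_lower_bound (Rr x); rewrite hRr.
Qed.

End ScaleSub.

Lemma positive_op_selfadj A : positive_op ip A -> forall x y, ip (A x) y = ip x (A y).
Proof.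
case=> [[lA _] hpos] x y.
have real u : Im (ip (A u) u) = 0 by have := hpos u; rewrite lecE => /andP[/eqP ->].
have := real (x + y); have := real (x + 'i *: y); have := real x; have := real y.
rewrite (linD lA) (linD lA) (linZ lA) !ipDl !ipDr !ipZl !ipZr [ip x (A y)]ipC.
case: (ip (A x) y) => a1 a2; case: (ip (A y) x) => b1 b2.
case: (ip (A x) x) => c1 c2; case: (ip (A y) y) => d1 d2 /= *.
by transitivity (b1 +i* (- b2))%C => //; congr (_ +i* _)%C; lra.
Qed.

Lemma hnorm_le_hclosure (E : set H) v (c : R) : hclosure ip E v -> 0 <= c ->
  (forall w, E w -> Re (ip v w) <= c * nm w) -> nm v <= c.
Proof.
move=> hv c0 hE; have nv := hnorm_ge0 v.
suff : nm v ^+ 2 <= c * nm v by nra.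
rewrite hnorm_sqr; apply/ler_addgt0Pr => e e0.
have k0 : 0 < c + nm v + 1 by rewrite ltr_wpDl // addr_ge0.
have [w Ew hvw] := hv _ (divr_gt0 e0 k0).
have -> : ip v v = ip v w + ip v (v - w) by rewrite ipBr addrC subrK.
have := hE _ Ew; have := cauchy_schwarz v (v - w); have := hnorm_ge0 (v - w).
have := ler_hdistD w v 0; rewrite !subr0 (hdistC w).
have : e / (c + nm v + 1) * (c + nm v + 1) = e by rewrite divfK ?gt_eqF.
move: hvw; move: (e / _) (nm w) (nm (v - w)) => d a b *; rewrite raddfD /=; nra.
Qed.

Section DiamondResolvent.
Variables (A A12 T Ta Td : H -> H).
Hypotheses (lA : linear A) (A_sa : forall x y, ip (A x) y = ip x (A y))
  (lA12 : linear A12) (A12_sa : forall x y, ip (A12 x) y = ip x (A12 y))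
  (A12_sqr : forall x, A12 (A12 x) = A x)
  (lT : linear T) (lTd : linear Td) (T_adj : forall x y, ip (T x) y = ip x (Ta y))
  (Ta_A12 : forall x, Ta (A12 x) = A12 (Td x))
  (Td_range : forall x, hclosure ip (range A12) (Td x)).
Local Notation K := (hclosure ip (range A)).

Lemma anormE x : anorm ip A x = nm (A12 x).
Proof. by rewrite /anorm /hnorm -A12_sqr A12_sa. Qed.

Lemma subspace_K : subspace K.
Proof.
apply: subspace_hclosure; split; first by exists 0 => //; rewrite (lin0 lA).
by move=> a _ _ [u _ <-] [v _ <-]; exists (a *: u + v) => //; rewrite (linDZ lA).
Qed.

Lemma K_A x : K (A x).
Proof. by apply: hclosure_sub; exists x. Qed.

Lemma A12_eq0 u : A u = 0 -> A12 u = 0.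
Proof. by move=> hu; apply: ip_eq0; rewrite A12_sa A12_sqr hu ip0r. Qed.

Lemma A12_T_eq0 u : A12 u = 0 -> A12 (T u) = 0.
Proof. by move=> hu; apply: ip_eq0; rewrite A12_sa T_adj Ta_A12 -A12_sa hu ip0l. Qed.

Lemma A12_Td_eq0 u : A12 u = 0 -> A12 (Td u) = 0.
Proof.
have Ta0 : Ta 0 = 0 by apply: ip_injr => x; rewrite -T_adj !ip0r.
by move=> hu; rewrite -Ta_A12 hu Ta0.
Qed.

Lemma anorm_normalize p : 0 < nm (A12 p) -> anorm ip A ((nm (A12 p))^-1%:C *: p) = 1.
Proof.
move=> s0; have sV : 0 <= (nm (A12 p))^-1 by rewrite invr_ge0 ltW.
by rewrite anormE (linZ lA12) hnormZ cabsR (ger0_norm sV) mulVf ?gt_eqF.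
Qed.

Lemma opnormA_ge0 S : (exists x, A x <> 0) -> (0 <= opnormA ip A S)%E.
Proof.
case=> x0 Ax0; have s0 : 0 < nm (A12 (A x0)).
  rewrite lt_neqAle hnorm_ge0 andbT eq_sym; apply/eqP => /hnorm_eq0 h; apply: Ax0.
  by apply: ip_eq0; rewrite -{1}A12_sqr A12_sa h ip0r.
apply: le_trans (ereal_sup_ubound _); last first.
  exists ((nm (A12 (A x0)))^-1%:C *: A x0) => //; split; last exact: anorm_normalize.
  by apply: subspaceZ subspace_K (K_A x0).
by rewrite lee_fin anormE hnorm_ge0.
Qed.

Lemma hnorm_Td_le (c : R) : 0 <= c -> (forall w, nm (A12 (T w)) <= c * nm (A12 w)) ->
  forall x, nm (Td x) <= c * nm x.
Proof.
move=> c0 hT x; apply: hnorm_le_hclosure (Td_range x) (mulr_ge0 c0 (hnorm_ge0 x)) _.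
(* [Re <Td x, A12 w> = Re <A12 (T w), x>] *)
move=> _ [w _ <-]; rewrite Re_ipC A12_sa -Ta_A12 -T_adj -A12_sa.
apply: le_trans (cauchy_schwarz _ _) _; rewrite [leRHS]mulrAC.
by apply: ler_wpM2r; [exact: hnorm_ge0 | exact: hT].
Qed.

Section Projector.
Variable P : H -> H.
Hypothesis hP : forall x, K (P x) /\ forall m, K m -> ip (x - P x) m = 0.

Lemma A12_proj x : A12 (P x) = A12 x.
Proof.
have : A (x - P x) = 0 by apply: ip_eq0; rewrite A_sa; apply: (hP x).2; apply: K_A.
by move/A12_eq0; rewrite (linB lA12) => /eqP; rewrite subr_eq0 => /eqP.
Qed.

Lemma A12_opnormA_bound S (c : R) : linear S -> (forall u, A12 u = 0 -> A12 (S u) = 0) ->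
  (opnormA ip A S <= c%:E)%E -> forall w, nm (A12 (S w)) <= c * nm (A12 w).
Proof.
move=> lS hker hc w.
(* [opnormA] only sees vectors of [K], and [P w] is one with the same [A12]-image *)
rewrite -(A12_proj w).
have -> : A12 (S w) = A12 (S (P w)).
  apply/eqP; rewrite -subr_eq0 -(linB lA12) -(linB lS) hker //.
  by rewrite (linB lA12) A12_proj subrr.
have Kp := (hP w).1; set p := P w in Kp *.
have [/hnorm_eq0 p0|np] := eqVneq (nm (A12 p)) 0; first by rewrite hker // p0 !hnorm0 mulr0.
have s0 : 0 < nm (A12 p) by rewrite lt_neqAle eq_sym np hnorm_ge0.
set u := (nm (A12 p))^-1%:C *: p.
have : ((anorm ip A (S u))%:E <= c%:E)%E.
  apply: le_trans hc; apply: ereal_sup_ubound; exists u => //.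
  by split; [apply: subspaceZ subspace_K Kp | exact: anorm_normalize].
have sV : 0 <= (nm (A12 p))^-1 by rewrite invr_ge0 ltW.
rewrite lee_fin anormE (linZ lS) (linZ lA12) hnormZ cabsR (ger0_norm sV).
by rewrite mulrC ler_pdivrMr.
Qed.

Lemma hnorm_PT_le (c : R) : 0 <= c -> (forall w, nm (A12 (Td w)) <= c * nm (A12 w)) ->
  forall x, nm (P (T x)) <= c * nm x.
Proof.
move=> c0 hTd x; apply: hnorm_le_hclosure (hP (T x)).1 (mulr_ge0 c0 (hnorm_ge0 x)) _.
move=> _ [w _ <-].
have -> : ip (P (T x)) (A w) = ip (T x) (A w).
  by apply/eqP; rewrite eq_sym -subr_eq0 -ipBl (hP _).2 //; apply: K_A.
rewrite T_adj -A12_sqr Ta_A12; apply: le_trans (cauchy_schwarz _ _) _.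
rewrite [c * _]mulrC -mulrA.
by apply: ler_wpM2l; [exact: hnorm_ge0 | exact: hTd].
Qed.

Lemma resolvent_adjoint_range (lam : R[i]) (c : R) (Rr Ra : H -> H) :
  0 <= c -> c < cabs lam -> (forall x, nm (P (T x)) <= c * nm x) ->
  (forall x, lam *: Rr x - Td (Rr x) = x) -> (forall x y, ip (Rr x) y = ip x (Ra y)) ->
  forall y, exists z, Ra (A12 y) = A12 z.
Proof.
move=> c0 clam hPT hRr hRa y.
have lPT : linear (P \o T).
  by move=> a u v /=; rewrite (linDZ lT) (proj_linear subspace_K hP).
have clam' : c < cabs lam^* by rewrite cabsJ.
have [z hz] := scale_sub_onto lPT c0 clam' hPT (P y).
have h12 : lam^* *: A12 z - A12 (T z) = A12 y.
  by have := congr1 A12 hz; rewrite (linB lA12) (linZ lA12) !A12_proj.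
have key u : ip u (A12 (T z)) = ip (Td u) (A12 z).
  by rewrite -A12_sa ipC T_adj Ta_A12 -ipC A12_sa.
exists z; apply: ip_injr => x.
by rewrite -hRa -h12 ipBr ipZr conjCK key -ipZl -ipBl hRr.
Qed.

End Projector.

Theorem diamond_resolvent (lam : R[i]) : (exists x, A x <> 0) ->
  (opnormA ip A T < (cabs lam)%:E)%E -> (opnormA ip A Td < (cabs lam)%:E)%E ->
  in_rhoA ip A A12 Td lam.
Proof.
move=> hAnz hT hTd.
have [c ec /andP[c0 clam]] : exists2 c : R,
    Order.max (opnormA ip A T) (opnormA ip A Td) = c%:E & 0 <= c < cabs lam.
  by apply: ge0_lt_fin; rewrite ?le_max ?opnormA_ge0 // gt_max hT hTd.
have hTc : (opnormA ip A T <= c%:E)%E by rewrite -ec le_max lexx.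
have hTdc : (opnormA ip A Td <= c%:E)%E by rewrite -ec le_max lexx orbT.
have [P hP] := choice (orthogonal_projection subspace_K (@hclosure_idem _)).
have hTd_le := hnorm_Td_le c0 (A12_opnormA_bound hP lT A12_T_eq0 hTc).
have hPT_le := hnorm_PT_le hP c0 (A12_opnormA_bound hP lTd A12_Td_eq0 hTdc).
have [Rr [bRr hRr RrL]] := scale_sub_invertible lTd c0 clam hTd_le.
have [Ra [bRa hRa]] := adjoint_exists bRr.
exists Rr; split.
  split=> //; exists Ra; split=> //.
  exact: (resolvent_adjoint_range hP c0 clam hPT_le hRr hRa).
split; last by split=> x; rewrite /= ?hRr ?RrL.
case: hAnz => x0 Ax0; exists x0 => Rx0; apply: Ax0.
by rewrite -(hRr x0) Rx0 scaler0 (lin0 lTd) subrr (lin0 lA).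
Qed.

End DiamondResolvent.

End Hilbert.

Theorem mainTheorem9 (R : realType) (H : lmodType R[i]) (ip : H -> H -> R[i])
  (A A12 T Td : H -> H) (lam : R[i]) :
  is_hilbert ip ->
  positive_op ip A -> (exists x, A x <> 0) ->
  is_sqrt_op ip A A12 ->
  in_BA12 ip A12 T ->
  is_diamond ip A12 T Td ->
  (opnormA ip A T < (cabs lam)%:E)%E ->
  (opnormA ip A Td < (cabs lam)%:E)%E ->
  in_rhoA ip A A12 Td lam.
Proof.
move=> hH hA hAnz [hA12 A12_sqr] [[lT _] _] [[lTd _] [[Ta [[_ T_adj] Ta_A12]] Td_range]].
have [[lA _] _] := hA; have [[lA12 _] _] := hA12.
exact: (diamond_resolvent hH lA (positive_op_selfadj hH hA) lA12 (positive_op_selfadj hH hA12)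
  A12_sqr lT lTd T_adj Ta_A12 Td_range hAnz).
Qed.
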